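(* Let $H_n$ be a maximal outerplanar graph with $n$ vertices and diameter $3$. Then $H_n$ contains an induced subgraph isomorphic to $G_6^1$ or to $G_6^2$.
   Context: An outerplanar graph is a graph drawable in the plane without crossings with all vertices on the outer face; it is maximal outerplanar if adding any edge between two nonadjacent vertices yields a non-outerplanar graph. $G_6^1$ is the graph on vertices $v_0,\dots,v_5$ with edges $v_1v_0, v_0v_4, v_4v_3, v_3v_5, v_5v_2, v_2v_1, v_0v_2, v_0v_3, v_2v_3$. $G_6^2$ is the graph on vertices $v_0,\dots,v_5$ with edges $v_0v_1, v_1v_2, v_2v_0, v_0v_3, v_2v_3, v_3v_4, v_4v_0, v_3v_5, v_5v_4$ (the fan with center $v_0$ over the path $v_1v_2v_3v_4$, plus a vertex $v_5$ adjacent to $v_3$ and $v_4$). *)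

From mathcomp Require Import all_boot.
Set Implicit Arguments. Unset Strict Implicit. Unset Printing Implicit Defensive.

Definition simple_graph (T : finType) (e : rel T) : Prop :=
  (forall x y, e x y = e y x) /\ (forall x, ~~ e x x).

(* Outerplanar drawing: vertices placed (injectively) in order on a circle,
   edges drawn as chords, and no two chords cross.  Chords ab and cd cross
   iff the positions interleave: pos a < pos c < pos b < pos d (up to the
   symmetry of edges, which the quantification over all edges covers). *)
Definition outerplanar (T : finType) (e : rel T) : Prop :=
  exists pos : T -> nat, injective pos /\
    forall a b c d, e a b -> e c d ->
      ~ (pos a < pos c /\ pos c < pos b /\ pos b < pos d).

Definition add_edge (T : finType) (e : rel T) (x y : T) : rel T :=
  fun u v => [|| e u v, (u == x) && (v == y) | (u == y) && (v == x)].

Definition maximal_outerplanar (T : finType) (e : rel T) : Prop :=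
  outerplanar e /\
  forall x y, x != y -> ~~ e x y -> ~ outerplanar (add_edge e x y).

Fixpoint within (T : finType) (e : rel T) (k : nat) (x y : T) : bool :=
  match k with
  | 0 => x == y
  | k'.+1 => within e k' x y || [exists z, e x z && within e k' z y]
  end.

Definition diameter_eq (T : finType) (e : rel T) (d : nat) : Prop :=
  (forall x y, within e d x y) /\
  (d > 0 -> exists x y, ~~ within e d.-1 x y).

Definition rel_of_edges (n : nat) (s : seq (nat * nat)) : rel 'I_n :=
  fun i j => ((nat_of_ord i, nat_of_ord j) \in s) || ((nat_of_ord j, nat_of_ord i) \in s).

Definition G61 : rel 'I_6 :=
  @rel_of_edges 6 [:: (1,0); (0,4); (4,3); (3,5); (5,2); (2,1); (0,2); (0,3); (2,3)].

Definition G62 : rel 'I_6 :=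
  @rel_of_edges 6 [:: (0,1); (1,2); (2,0); (0,3); (2,3); (3,4); (4,0); (3,5); (5,4)].

Definition has_induced (T : finType) (e : rel T) (n : nat) (H : rel 'I_n) : Prop :=
  exists f : 'I_n -> T, injective f /\ forall i j, e (f i) (f j) = H i j.

(* Draw the graph on a circle, starting at a vertex x at distance 3 from y.
   Among the chords separating x from y take the widest one, cd: its outer
   triangle has apex x, so neither c nor d is adjacent to y.  Walking from cd
   towards y through the triangles of the fan at c (or at d), whose apexes
   avoid y, one reaches a quadrilateral c c' d' d with diagonal cd' and y
   between c' and d'.  The triangle outside cd and the triangle on c'd'
   towards y complete it to an induced G_6^2. *)

From mathcomp Require Import all_boot zify.
From Stdlib Require Import Classical.

Set Implicit Arguments. Unset Strict Implicit. Unset Printing Implicit Defensive.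

Section MaximalOuterplanar.

Variables (T : finType) (e : rel T).
Hypotheses (e_sym : symmetric e) (e_irr : irreflexive e).

(* [lia] becomes very slow in the presence of the boolean adjacency facts. *)
Ltac pos_lia := repeat match goal with
  | H : is_true (e _ _) |- _ => clear H
  | H : e _ _ = false |- _ => clear H
  end; lia.

Definition noncrossing (pos : T -> nat) : Prop :=
  forall a b c d, e a b -> e c d -> ~ (pos a < pos c /\ pos c < pos b /\ pos b < pos d).

Definition drawing (pos : T -> nat) : Prop := injective pos /\ noncrossing pos.

Definition crossing (pa pb pc pd : nat) : Prop :=
  ((pa < pc < pb \/ pb < pc < pa) /\ (pd < pa /\ pd < pb \/ pa < pd /\ pb < pd)) \/
  ((pa < pd < pb \/ pb < pd < pa) /\ (pc < pa /\ pc < pb \/ pa < pc /\ pb < pc)).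

Lemma edges_not_crossing pos a b c d : noncrossing pos -> e a b -> e c d ->
  ~ crossing (pos a) (pos b) (pos c) (pos d).
Proof.
move=> nc Eab Ecd; have Eba : e b a by rewrite e_sym.
have Edc : e d c by rewrite e_sym.
have := nc a b c d Eab Ecd; have := nc a b d c Eab Edc;
have := nc b a c d Eba Ecd; have := nc b a d c Eba Edc;
have := nc c d a b Ecd Eab; have := nc c d b a Ecd Eba;
have := nc d c a b Edc Eab; have := nc d c b a Edc Eba.
rewrite /crossing; lia.
Qed.

Lemma edge_separates pos a b u v : noncrossing pos -> e a b ->
  pos a < pos u < pos b -> pos v < pos a \/ pos b < pos v -> ~~ e u v.
Proof.
move=> nc Eab Hu Hv; apply/negP => Euv.
by apply: (edges_not_crossing nc Eab Euv); rewrite /crossing; lia.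
Qed.

Hypothesis e_mop : maximal_outerplanar e.

Lemma nonedge_crossed pos x y : drawing pos -> x != y -> ~~ e x y ->
  exists c d, e c d /\ crossing (pos x) (pos y) (pos c) (pos d).
Proof.
move=> [inj nc] xy nxy; apply: NNPP => none.
apply: (e_mop.2 x y xy nxy); exists pos; split=> // a b c d.
have free c' d' : e c' d' -> ~ crossing (pos x) (pos y) (pos c') (pos d').
  by move=> Ecd cr; apply: none; exists c', d'.
rewrite /add_edge => /or3P [Eab|/andP[/eqP-> /eqP->]|/andP[/eqP-> /eqP->]]
  /or3P [Ecd|/andP[/eqP-> /eqP->]|/andP[/eqP-> /eqP->]];
  [exact: nc | ..]; try move: (free _ _ Eab); try move: (free _ _ Ecd); rewrite /crossing; lia.
Qed.

Lemma nonedge_inner_vertex pos x y : drawing pos -> pos x < pos y -> ~~ e x y ->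
  exists z, pos x < pos z < pos y.
Proof.
move=> Dpos lt_xy Nxy.
have xy : x != y by apply: contraTneq lt_xy => ->; rewrite ltnn.
have [c [d [_ cr]]] := nonedge_crossed Dpos xy Nxy.
have [Hc|Hd] : pos x < pos c < pos y \/ pos x < pos d < pos y by rewrite /crossing in cr; lia.
- by exists c.
- by exists d.
Qed.

(* The common neighbour is the last vertex of the arc adjacent to [u]; the
   vertex right after [u] shows that there is one. *)
Lemma common_neighbor_inside pos u v z : drawing pos -> e u v ->
  pos u < pos z < pos v -> exists w, [/\ pos u < pos w < pos v, e u w & e w v].
Proof.
move=> [inj nc] Euv Hz; have Pz : pos u < pos z by lia.
case: (@arg_minnP _ z (fun t => pos u < pos t) pos Pz) => s lt_us s_min.
have Eus : e u s.
  apply: contraT => /(nonedge_inner_vertex (conj inj nc) lt_us) [t /andP [lt_ut lt_ts]].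
  by have := s_min t lt_ut; rewrite leqNgt lt_ts.
have Ps : (pos u < pos s < pos v) && e u s by rewrite Eus andbT; have := s_min z Pz; lia.
case: (@arg_maxnP _ s (fun t => (pos u < pos t < pos v) && e u t) pos Ps)
  => w /andP [Hw Euw] w_max.
exists w; split=> //; apply: contraT => Nwv.
have wv : w != v by apply: contraTneq Hw => ->; lia.
have [c [d [Ecd cr]]] := nonedge_crossed (conj inj nc) wv Nwv.
have [/inj cu|[/inj du|[cr'|cr']]] : pos c = pos u \/ pos d = pos u \/
    crossing (pos u) (pos v) (pos c) (pos d) \/ crossing (pos u) (pos w) (pos c) (pos d).
  by rewrite /crossing in cr *; lia.
- by subst c; move: (w_max d); rewrite Ecd andbT /crossing in cr *; lia.
- by subst d; move: (w_max c); rewrite e_sym Ecd andbT /crossing in cr *; lia.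
- by case: (edges_not_crossing nc Euv Ecd cr').
- by case: (edges_not_crossing nc Euw Ecd cr').
Qed.

Definition rotate (pos : T -> nat) (r z : T) : nat :=
  if pos r <= pos z then pos z else pos z + (\max_t pos t).+1.

Lemma rotate_drawing pos r : drawing pos -> drawing (rotate pos r).
Proof.
move=> [inj nc]; have le_max t : pos t <= \max_t pos t := leq_bigmax t.
split=> [a b|a b c d Eab Ecd].
  move=> eq_ab; apply: inj; move: eq_ab (le_max a) (le_max b).
  by rewrite /rotate; do 2 case: ifP => ?; lia.
have Eba : e b a by rewrite e_sym.
have Edc : e d c by rewrite e_sym.
have := nc a b c d Eab Ecd; have := nc c d b a Ecd Eba;
have := nc b a d c Eba Edc; have := nc d c a b Edc Eab.
move: (le_max a) (le_max b) (le_max c) (le_max d).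
by rewrite /rotate; do 4 case: ifP => ?; lia.
Qed.

Lemma rotate_first pos r z : rotate pos r r <= rotate pos r z.
Proof.
have := @leq_bigmax _ pos r.
by rewrite /rotate leqnn; case: ifP => //; lia.
Qed.

Lemma common_neighbor_outside pos u v z : drawing pos -> e u v -> pos u < pos v ->
  pos z < pos u \/ pos v < pos z ->
  exists w, [/\ pos w < pos u \/ pos v < pos w, e u w & e w v].
Proof.
move=> Dpos Euv lt_uv Hz.
have le_max t : pos t <= \max_t pos t := leq_bigmax t.
have [||w [Hw Evw Ewu]] := @common_neighbor_inside (rotate pos v) v u z
  (rotate_drawing v Dpos); first by rewrite e_sym.
  by move: (le_max u) (le_max v) (le_max z); rewrite /rotate leqnn; do 2 case: ifP => ?; lia.
exists w; split; rewrite 1?e_sym //.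
by move: Hw (le_max u) (le_max w); rewrite /rotate leqnn; do 2 case: ifP => ?; lia.
Qed.

(* Witness: [c] is the centre of the fan over [p d d' c'], where [p] is the apex
   of [cd] away from [y] and [q] that of [c'd'] towards [y]. *)
Lemma G62_of_quadrilateral pos c c' d' d y z : drawing pos ->
  pos c < pos c' < pos y -> pos y < pos d' < pos d -> pos z < pos c \/ pos d < pos z ->
  e c c' -> e c' d' -> e d' d -> e c d -> e c d' -> has_induced e G62.
Proof.
move=> [inj nc] Hc' Hd' Hz Ecc' Ec'd' Ed'd Ecd Ecd'.
have lt_cd : pos c < pos d by pos_lia.
have Hy : pos c' < pos y < pos d' by pos_lia.
have [p [Hp Ecp Epd]] := common_neighbor_outside (conj inj nc) Ecd lt_cd Hz.
have [q [Hq Ec'q Eqd']] := common_neighbor_inside (conj inj nc) Ec'd' Hy.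
have Nc'p : e c' p = false by apply/negbTE/(edge_separates nc Ecd); pos_lia.
have Nd'p : e d' p = false by apply/negbTE/(edge_separates nc Ecd); pos_lia.
have Nqp : e q p = false by apply/negbTE/(edge_separates nc Ecd); pos_lia.
have Nqc : e q c = false by apply/negbTE/(edge_separates nc Ec'd'); pos_lia.
have Nqd : e q d = false by apply/negbTE/(edge_separates nc Ec'd'); pos_lia.
have Nc'd : e c' d = false by apply/negbTE/(edge_separates nc Ecd'); pos_lia.
exists (fun i : 'I_6 => nth c [:: c; p; d; d'; c'; q] i); split.
  move=> [[|[|[|[|[|[|i]]]]]] Hi] [[|[|[|[|[|[|j]]]]]] Hj] //= /(congr1 pos) eq_ij;
    apply: val_inj => /=; pos_lia.
move=> [[|[|[|[|[|[|i]]]]]] Hi] [[|[|[|[|[|[|j]]]]]] Hj] //=;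
  rewrite /G62 /rel_of_edges /=; by [| rewrite e_sym | rewrite e_irr].
Qed.

(* Induction along the fan of triangles at [c], whose apexes avoid [y] since [c]
   is not adjacent to [y]. *)
Lemma G62_descent_right pos c y z d d2 : drawing pos -> ~~ e c y ->
  e c d -> e d d2 -> e c d2 -> pos c < pos y < pos d -> pos d < pos d2 ->
  pos z < pos c \/ pos d2 < pos z -> has_induced e G62.
Proof.
move=> Dpos Ncy; have [n] := ubnP (pos d); elim: n => // n IH in d d2 *.
rewrite ltnS => le_dn Ecd Edd2 Ecd2 Hy lt_dd2 Hz.
have [w [Hw Ecw Ewd]] := common_neighbor_inside Dpos Ecd Hy.
case: (ltngtP (pos w) (pos y)) => [lt_wy|lt_yw|/Dpos.1 wy].
- apply: (G62_of_quadrilateral Dpos (y := y) _ _ Hz Ecw Ewd Edd2 Ecd2 Ecd); pos_lia.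
- apply: (IH w d) => //; pos_lia.
- by move: Ncy; rewrite -wy Ecw.
Qed.

Definition mirror (pos : T -> nat) (z : T) : nat := \max_t pos t - pos z.

Lemma mirror_lt pos a b : (mirror pos a < mirror pos b) = (pos b < pos a).
Proof.
by move: (@leq_bigmax _ pos a) (@leq_bigmax _ pos b); rewrite /mirror; lia.
Qed.

Lemma mirror_drawing pos : drawing pos -> drawing (mirror pos).
Proof.
move=> [inj nc]; split=> [a b eq_ab|a b c d Eab Ecd].
  apply: inj; move: eq_ab (@leq_bigmax _ pos a) (@leq_bigmax _ pos b).
  by rewrite /mirror; lia.
rewrite !mirror_lt => -[lt_ca [lt_bc lt_db]].
by apply: (nc d c b a); rewrite 1?e_sym.
Qed.

Lemma G62_descent_left pos d y z c c2 : drawing pos -> ~~ e d y ->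
  e c d -> e c2 c -> e c2 d -> pos c < pos y < pos d -> pos c2 < pos c ->
  pos z < pos c2 \/ pos d < pos z -> has_induced e G62.
Proof.
move=> Dpos Ndy Ecd Ec2c Ec2d Hy lt_c2c Hz.
apply: (G62_descent_right (mirror_drawing Dpos) Ndy (z := z) (d := c) (d2 := c2));
  rewrite ?mirror_lt 1?e_sym //; pos_lia.
Qed.

Section Distance3.

Variables (pos : T -> nat) (x y : T).
Hypotheses (Dpos : drawing pos) (x_first : forall z, pos x <= pos z).
Hypotheses (xy : x != y) (Nxy : ~~ e x y) (Nxzy : forall z, e x z -> ~~ e z y).

(* Any other outer apex of the widest separating chord would span a wider one. *)
Lemma outermost_separating_chord : exists c d,
  [/\ e x c, e x d, e c d, pos x < pos c < pos y & pos y < pos d].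
Proof.
pose sep t := [&& e t.1 t.2, pos x < pos t.1, pos t.1 < pos y & pos y < pos t.2].
have [t0 sep_t0] : exists t, sep t.
  have [c [d [Ecd cr]]] := nonedge_crossed Dpos xy Nxy.
  move: (x_first c) (x_first d); rewrite /crossing in cr => le_xc le_xd.
  have [lt_xc|lt_xd] : pos x < pos c < pos y \/ pos x < pos d < pos y by pos_lia.
  - by exists (c, d); rewrite /sep /= Ecd; pos_lia.
  - by exists (d, c); rewrite /sep /= e_sym Ecd; pos_lia.
case: (@arg_maxnP _ t0 sep (fun t => pos t.2 - pos t.1) sep_t0)
  => -[c d] + widest; rewrite /sep /= => /and4P [Ecd lt_xc lt_cy lt_yd].
have [|w [Hw Ecw Ewd]] := common_neighbor_outside Dpos Ecd _ (or_introl lt_xc); first pos_lia.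
suff wx : w = x by subst w; exists c, d; rewrite e_sym lt_xc lt_cy.
apply: Dpos.1; apply/eqP; rewrite eqn_leq x_first andbT leqNgt; apply/negP => lt_xw.
by case: Hw => Hw; [move: (widest (w, d)) | move: (widest (c, w))];
  rewrite /sep /= ?Ewd ?Ecw /=; pos_lia.
Qed.

Lemma G62_of_distance3 : has_induced e G62.
Proof.
have [c [d [Exc Exd Ecd /andP [lt_xc lt_cy] lt_yd]]] := outermost_separating_chord.
have [|w [Hw Ecw Ewd]] := common_neighbor_inside Dpos Ecd (z := y); first pos_lia.
case: (ltngtP (pos w) (pos y)) => [lt_wy|lt_yw|/Dpos.1 wy].
- apply: (G62_descent_left Dpos (Nxzy Exd) Ewd Ecw Ecd (z := x)); pos_lia.
- apply: (G62_descent_right Dpos (Nxzy Exc) Ecw Ewd Ecd (z := x)); pos_lia.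
- by move: (Nxzy Exc); rewrite -wy Ecw.
Qed.

End Distance3.

End MaximalOuterplanar.

Lemma not_within2 (T : finType) (e : rel T) x y : ~~ within e 2 x y ->
  [/\ x != y, ~~ e x y & forall z, e x z -> ~~ e z y].
Proof.
rewrite /= !negb_or => /andP [/andP [xy /existsPn Nxy] /existsPn Nxzy].
split=> // [|z Exz]; first by move: (Nxy y); rewrite eqxx andbT.
by move: (Nxzy z); rewrite Exz /= negb_or => /andP [_ /existsPn /(_ y)]; rewrite eqxx andbT.
Qed.

Theorem theorem3p2 (T : finType) (e : rel T) :
  simple_graph e -> maximal_outerplanar e -> diameter_eq e 3 ->
  has_induced e G61 \/ has_induced e G62.
Proof.
move=> [e_sym e_irr] e_mop [_ /(_ isT) [x [y /not_within2 [xy Nxy Nxzy]]]].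
have [pos Dpos] := e_mop.1.
right; apply: (G62_of_distance3 e_sym (fun z => negbTE (e_irr z)) e_mop
  (rotate_drawing e_sym x Dpos) (rotate_first pos x) xy Nxy Nxzy).
Qed.
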